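(* Let $G$ be a finite unweighted undirected graph with $n$ nodes. Let $H$ be the spanning subgraph of $G$ obtained as follows: start with all nodes of $G$ and no edges; for each node $x$ of $G$, add to $H$ exactly $\lfloor n^{1/3} \rfloor$ edges of $G$ incident to $x$ (chosen arbitrarily), or, if $\deg_G(x) < \lfloor n^{1/3} \rfloor$, add all edges of $G$ incident to $x$. Then apply $6$-spanner-completion to $H$. Regardless of the choices made (of initial edges, of violating pairs, and of shortest paths), the resulting graph $H$ has at most $O(n^{4/3})$ edges.
   Context: For a graph $F$ and nodes $u,v$, $d_F(u,v)$ denotes the length (number of edges) of a shortest path from $u$ to $v$ in $F$ ($\infty$ if none exists). A spanning subgraph $H$ of $G$ is an additive $k$-spanner of $G$ if $d_H(u,v) \le d_G(u,v)+k$ for every pair of nodes $u,v$. The procedure $k$-spanner-completion applied to a spanning subgraph $H$ of $G$ is: as long as there exists a pair of nodes $u,v$ with $d_H(u,v) > d_G(u,v)+k$, pick such a pair, find a shortest path from $u$ to $v$ in $G$, and add all edges of this path to $H$. When it terminates, $H$ is an additive $k$-spanner of $G$. The $O(\cdot)$ bound refers to an absolute constant independent of $G$ and $n$. *)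

(* A finite simple graph G is a symmetric irreflexive
   relation e on a finType T (nodes = T, n = #|T|). Edges are unordered
   pairs, represented as 2-element sets [set x; y]. A spanning subgraph H
   is given by its edge set H : {set {set T}}. *)
From mathcomp Require Import all_boot all_order.
Set Implicit Arguments. Unset Strict Implicit. Unset Printing Implicit Defensive.

Section Graphs.
Variable T : finType.

Definition gedges (e : rel T) : {set {set T}} :=
  [set [set x; y] | x in T, y in T & e x y].

Definition incident (e : rel T) (x : T) : {set {set T}} :=
  [set f in gedges e | x \in f].
Definition deg (e : rel T) (x : T) : nat := #|incident e x|.

Definition hrel (H : {set {set T}}) : rel T := fun x y => [set x; y] \in H.

Definition walk (r : rel T) (u v : T) (d : nat) : Prop :=
  exists p : seq T, [&& path r u p, last u p == v & size p == d].

(* d_r(u,v) = d  (finite distance; infinite distance = no such d). *)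
Definition dist_is (r : rel T) (u v : T) (d : nat) : Prop :=
  walk r u v d /\ forall d', d' < d -> ~ walk r u v d'.

Definition violating (e : rel T) (H : {set {set T}}) (k : nat) (u v : T) : Prop :=
  exists d, dist_is e u v d /\ forall d', d' <= d + k -> ~ walk (hrel H) u v d'.

Definition additive_spanner (e : rel T) (H : {set {set T}}) (k : nat) : Prop :=
  H \subset gedges e /\ forall u v, ~ violating e H k u v.

Definition path_edges (u : T) (p : seq T) : {set {set T}} :=
  [set f in [seq [set a.1; a.2] | a <- zip (u :: p) p]].

Definition completion_step (e : rel T) (k : nat) (H H' : {set {set T}}) : Prop :=
  exists (u v : T) (p : seq T),
    [/\ violating e H k u v,
        [&& path e u p & last u p == v],
        dist_is e u v (size p) &
        H' = H :|: path_edges u p].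

End Graphs.

From mathcomp Require Import all_boot all_order zify.
From mathcomp Require Import boolp.

Set Implicit Arguments. Unset Strict Implicit. Unset Printing Implicit Defensive.

(* A potential argument. Call (a, b, i) with i < 5 a close triple of H when
   d_H(a,b) <= d_G(a,b) + i; there are at most 5 n^2 of them and adding edges
   never destroys one. Consider a completion step along a shortest G-path P
   from u to v. An edge of P is missing from H only when both its endpoints
   are heavy (they chose k edges, none of them this one), and since P is
   shortest, a node is a chosen neighbour of at most 5 nodes of P; so if Y
   collects the chosen neighbours of endpoints of missing edges, then
   k * #(new edges) <= 5 |Y|. Let x, z be chosen neighbours of the first and
   the last heavy endpoint and y in Y: the two detours x -> y and y -> z along
   P cannot both have stretch <= 4 in H already, or u and v would be within
   d_G(u,v) + 6 in H. Hence the step creates at least k |Y| / 2 new close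
   pairs, i.e. k^2 * #(new edges) <= 10 * #(new close triples). Summing,
   k^2 |H| <= k^3 n + 50 n^2, which is O(k^2 n^(4/3)) for k = floor(n^(1/3)). *)

Section Walks.
Variable T : finType.
Implicit Types (r : rel T) (a b c : T).

Lemma walk0 r a : walk r a a 0.
Proof. by exists [::]; rewrite /= eqxx. Qed.

Lemma walk1 r a b : r a b -> walk r a b 1.
Proof. by move=> h; exists [:: b]; rewrite /= h eqxx. Qed.

Lemma walk_cat r a b c d1 d2 :
  walk r a b d1 -> walk r b c d2 -> walk r a c (d1 + d2).
Proof.
move=> [p /and3P[hp /eqP hl /eqP hs]] [q /and3P[hq /eqP hl' /eqP hs']].
by exists (p ++ q); rewrite cat_path last_cat size_cat hl hp hq hl' hs hs' !eqxx.
Qed.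

Lemma sub_walk r r' a b d : subrel r r' -> walk r a b d -> walk r' a b d.
Proof.
move=> hr [p /and3P[hp hl hs]]; exists p; rewrite hl hs !andbT.
exact: sub_path hp.
Qed.

Lemma walk_steps r (f : nat -> T) i j : i <= j ->
  (forall t, i <= t < j -> r (f t) (f t.+1)) -> walk r (f i) (f j) (j - i).
Proof.
elim: j => [|j IH]; first by rewrite leqn0 => /eqP-> _; rewrite subnn; apply: walk0.
rewrite leq_eqVlt => /orP[/eqP-> _|hij h]; first by rewrite subnn; apply: walk0.
rewrite subSn // -[(j - i).+1]addn1.
by apply: walk_cat (IH hij _) (walk1 _) => [t ht|]; apply: h; lia.
Qed.

Definition walk_le r a b t := exists2 d, d <= t & walk r a b d.

Lemma walk_leW r a b d t : walk r a b d -> d <= t -> walk_le r a b t.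
Proof. by move=> w hd; exists d. Qed.

Lemma walk_le_cat r a b c t1 t2 :
  walk_le r a b t1 -> walk_le r b c t2 -> walk_le r a c (t1 + t2).
Proof.
move=> [d1 h1 w1] [d2 h2 w2]; exists (d1 + d2); first exact: leq_add.
exact: walk_cat w1 w2.
Qed.

Lemma walk_le_mono r a b t t' : walk_le r a b t -> t <= t' -> walk_le r a b t'.
Proof. by move=> [d hd w] le; exists d => //; apply: leq_trans le. Qed.

Lemma sub_walk_le r r' a b t : subrel r r' -> walk_le r a b t -> walk_le r' a b t.
Proof. by move=> hr [d hd w]; exists d => //; apply: sub_walk w. Qed.

Lemma dist_is_uniq r a b d d' : dist_is r a b d -> dist_is r a b d' -> d = d'.
Proof.
move=> [w h] [w' h']; case: (ltngtP d d') => // lt; first by case: (h' _ lt w).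
by case: (h _ lt w').
Qed.

Lemma walk_dist r a b d : walk r a b d -> exists2 D, dist_is r a b D & D <= d.
Proof.
elim/ltn_ind: d => d IH w.
have [[d' lt w']|none] := pselect (exists2 d', d' < d & walk r a b d').
  by have [D hD le] := IH d' lt w'; exists D => //; apply: leq_trans le (ltnW lt).
by exists d => //; split => // d' lt w'; apply: none; exists d'.
Qed.

End Walks.

Section Edges.
Variable T : finType.

Lemma eq_set2 (x y a b : T) :
  [set x; y] = [set a; b] -> (x = a /\ y = b) \/ (x = b /\ y = a).
Proof.
move=> E.
have /set2P hx : x \in [set a; b] by rewrite -E set21.
have /set2P hy : y \in [set a; b] by rewrite -E set22.
have /set2P ha : a \in [set x; y] by rewrite E set21.
have /set2P hb : b \in [set x; y] by rewrite E set22.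
by case: hx hy ha hb => hx [] hy [] ha [] hb; subst; auto.
Qed.

Lemma sub_hrel (H H' : {set {set T}}) : H \subset H' -> subrel (hrel H) (hrel H').
Proof. by move=> hH x y; apply: (subsetP hH). Qed.

Lemma path_edgesP (u : T) p f :
  reflect (exists2 t, t < size p & f = [set nth u (u :: p) t; nth u (u :: p) t.+1])
          (f \in path_edges u p).
Proof.
have sz : size (zip (u :: p) p) = size p by rewrite size_zip /=; lia.
rewrite inE; apply: (iffP (nthP set0)) => [[t ht <-]|[t ht ->]].
  rewrite size_map sz in ht; exists t => //.
  by rewrite (nth_map (u, u)) ?sz // nth_zip_cond sz ht.
exists t; first by rewrite size_map sz.
by rewrite (nth_map (u, u)) ?sz // nth_zip_cond sz ht.
Qed.

End Edges.

Lemma sum_card_le_bigcup (I T : finType) (A : {set I}) (F : I -> {set T}) c :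
  (forall y, #|[set i in A | y \in F i]| <= c) ->
  \sum_(i in A) #|F i| <= c * #|\bigcup_(i in A) F i|.
Proof.
move=> hc.
have -> : \sum_(i in A) #|F i| = \sum_(y in \bigcup_(i in A) F i) #|[set i in A | y \in F i]|.
  rewrite (eq_bigr (fun i => \sum_(y in F i) 1)) => [|i _]; last by rewrite sum1_card.
  rewrite (exchange_big_dep (mem (\bigcup_(i in A) F i))) /= => [|i y hi hy]; last first.
    by apply/bigcupP; exists i.
  by apply: eq_bigr => y _; rewrite -sum1_card; apply: eq_bigl => i; rewrite inE.
rewrite mulnC -sum_nat_const; exact: leq_sum.
Qed.

Lemma card_near_le s w (B : {set 'I_s}) :
  (forall i j, i \in B -> j \in B -> j <= i + w) -> #|B| <= w.*2.+1.
Proof.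
move=> hB; have [->|[i0 hi0]] := set_0Vmem B; first by rewrite cards0.
rewrite cardE -(size_map val) -(size_iota (i0 - w) w.*2.+1).
apply: uniq_leq_size; first by rewrite (map_inj_uniq val_inj) enum_uniq.
move=> x /mapP[j]; rewrite mem_enum => hj ->; rewrite mem_iota /=.
have := hB _ _ hi0 hj; have := hB _ _ hj hi0; rewrite -addnn; lia.
Qed.

Lemma card_bigcup_le (I T : finType) (F : I -> {set T}) :
  #|\bigcup_(i : I) F i| <= \sum_(i : I) #|F i|.
Proof.
elim/big_rec2: _ => [|i A n _ h]; first by rewrite cards0.
by apply: leq_trans (leq_card_setU _ _).1 _; rewrite leq_add2l.
Qed.

Lemma pair_cover_card (T : finType) (X1 X2 Y : {set T}) (P : {set T * T}) k :
  k <= #|X1| -> k <= #|X2| ->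
  (forall x y z, x \in X1 -> y \in Y -> z \in X2 -> ((x, y) \in P) || ((y, z) \in P)) ->
  k * #|Y| <= 2 * #|P|.
Proof.
move=> h1 h2 hcov.
pose Y1 := [set y in Y | [forall x in X1, (x, y) \in P]].
have sub1 : setX X1 Y1 \subset P.
  apply/subsetP => -[x y]; rewrite !inE /= => /andP[hx /andP[_ /forall_inP]].
  exact.
have sub2 : setX (Y :\: Y1) X2 \subset P.
  apply/subsetP => -[y z]; rewrite !inE /= => /andP[/andP[hn hy] hz].
  move: hn; rewrite hy /= => /forall_inPn[x hx hxy].
  by have := hcov x y z hx hy hz; rewrite (negbTE hxy).
have hY : #|Y1| + #|Y :\: Y1| = #|Y|.
  by rewrite -(cardsID Y1 Y) (setIidPr _) //; apply/subsetP => y; rewrite inE => /andP[].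
have := subset_leq_card sub1; have := subset_leq_card sub2; rewrite !cardsX => c2 c1.
rewrite -hY mulnDr mul2n -addnn leq_add //.
  by apply: leq_trans c1; apply: leq_mul.
by apply: leq_trans c2; rewrite mulnC; apply: leq_mul.
Qed.

Section CloseTriples.
Variables (T : finType) (e : rel T).
Implicit Types (H : {set {set T}}) (a b : T).

Definition stretch_le H a b i :=
  exists2 d, dist_is e a b d & walk_le (hrel H) a b (d + i).

Definition close_triples H : {set T * T * 'I_5} :=
  [set z : T * T * 'I_5 | `[< stretch_le H z.1.1 z.1.2 z.2 >] ].

Lemma close_triples_mono H H' : H \subset H' -> close_triples H \subset close_triples H'.
Proof.
move=> hH; apply/subsetP => z; rewrite !inE => /asboolP[d hd w]; apply/asboolP.
by exists d => //; apply: sub_walk_le w => x y; apply: (subsetP hH).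
Qed.

Lemma card_close_triples H : #|close_triples H| <= 5 * #|T| ^ 2.
Proof. by apply: leq_trans (max_card _) _; rewrite !card_prod card_ord; lia. Qed.

Definition new_close_pairs H H' : {set T * T} :=
  [set z.1 | z in close_triples H' :\: close_triples H].

Lemma card_new_close_pairs H H' :
  #|new_close_pairs H H'| <= #|close_triples H' :\: close_triples H|.
Proof. exact: leq_imset_card. Qed.

Lemma mem_new_close_pairs H H' a b D t : dist_is e a b D -> D <= t <= D + 4 ->
  ~ walk_le (hrel H) a b t -> walk_le (hrel H') a b t -> (a, b) \in new_close_pairs H H'.
Proof.
move=> hD /andP[h1 h2] nw w.
have lt5 : t - D < 5 by lia.
have eqt : D + (t - D) = t by lia.
apply/imsetP; exists (a, b, Ordinal lt5) => //.
rewrite !inE /=; apply/andP; split; last by apply/asboolP; exists D; rewrite ?eqt.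
apply/asboolP => -[d hd]; rewrite (dist_is_uniq hd hD) eqt; exact: nw.
Qed.

End CloseTriples.

Section Spanner.
Variables (T : finType) (e : rel T) (k : nat) (S : T -> {set {set T}}).
Hypotheses (esym : symmetric e) (eirr : irreflexive e).
Hypothesis hS : forall x, S x \subset incident e x /\ #|S x| = minn k (deg e x).

Lemma gedgesP a b : [set a; b] \in gedges e -> e a b.
Proof.
case/imset2P => x y _; rewrite inE => /andP[_ hxy] /eq_set2[[-> ->]|[-> ->]] //.
by rewrite esym.
Qed.

Lemma mem_gedges a b : e a b -> [set a; b] \in gedges e.
Proof. by move=> h; apply/imset2P; exists a b; rewrite ?inE ?h. Qed.

Definition chosen x := [set y | [set x; y] \in S x].

Lemma chosen_edge x y : y \in chosen x -> e x y.
Proof.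
rewrite inE => /(subsetP (hS x).1); rewrite inE => /andP[/gedgesP //].
Qed.

Lemma card_chosen x : #|chosen x| = #|S x|.
Proof.
have -> : S x = [set [set x; y] | y in chosen x].
  apply/setP => f; apply/idP/imsetP => [hf|[y]]; last by rewrite inE => h ->.
  have := subsetP (hS x).1 _ hf; rewrite inE => /andP[/imset2P[a b _ _ def_f]].
  rewrite {f}def_f in hf *; rewrite !inE => /orP[]/eqP ?; subst.
    by exists b; rewrite ?inE.
  by exists a; rewrite ?inE setUC.
rewrite card_in_imset // => y y' hy _ E.
have /set2P[hyx|//] : y \in [set x; y'] by rewrite -E set22.
by move: (chosen_edge hy); rewrite hyx eirr.
Qed.

Lemma card_chosen_full x y : e x y -> [set x; y] \notin S x -> #|chosen x| = k.
Proof.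
move=> hxy hn; rewrite card_chosen.
have hp : S x \proper incident e x.
  rewrite properE (hS x).1 /=; apply/subsetPn; exists [set x; y] => //.
  by rewrite inE mem_gedges // set21.
by have := proper_card hp; rewrite (hS x).2 /deg; lia.
Qed.

Section CompletionStep.
Variables (H : {set {set T}}) (u v : T) (p : seq T).
Hypothesis SH : \bigcup_(x : T) S x \subset H.
Hypothesis huv : violating e H 6 u v.
Hypothesis hp : path e u p.
Hypothesis hpv : last u p = v.
Hypothesis hdist : dist_is e u v (size p).

Local Notation s := (size p).
Local Notation node := (nth u (u :: p)).
Local Notation H' := (H :|: path_edges u p).

Lemma walk_prefix (r : rel T) j :
  (forall t, t < j -> r (node t) (node t.+1)) -> walk r u (node j) j.
Proof.
move=> h; rewrite -[X in walk _ _ _ X]subn0.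
by apply: (walk_steps (f := node) (i := 0)) => // t /andP[].
Qed.

Lemma walk_suffix (r : rel T) i : i <= s ->
  (forall t, i <= t < s -> r (node t) (node t.+1)) -> walk r (node i) v (s - i).
Proof. by rewrite -hpv (last_nth u); apply: (walk_steps (f := node)). Qed.

Lemma node_edge t : t < s -> e (node t) (node t.+1).
Proof. by move: t; apply/(pathP u). Qed.

Lemma node_edge_new t : t < s -> hrel H' (node t) (node t.+1).
Proof. by move=> ht; rewrite /hrel inE; apply/orP; right; apply/path_edgesP; exists t. Qed.

Lemma path_shortest d : walk e u v d -> s <= d.
Proof. by case: hdist => _ h w; rewrite leqNgt; apply/negP => lt; apply: h lt w. Qed.

Lemma no_short_H_walk : ~ walk_le (hrel H) u v (s + 6).
Proof.
case: huv => d [hd hno] [d' hd' w]; rewrite -(dist_is_uniq hdist hd) in hno.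
exact: hno d' hd' w.
Qed.

Lemma chosen_hrel x y : y \in chosen x -> hrel H x y /\ hrel H y x.
Proof.
rewrite inE => hxy; have hH : [set x; y] \in H.
  by apply: (subsetP SH); apply/bigcupP; exists x.
by split; rewrite /hrel // setUC.
Qed.

Definition missing t := (t < s) && ([set node t; node t.+1] \notin H).

Lemma node_edge_old t : t < s -> ~~ missing t -> hrel H (node t) (node t.+1).
Proof. by rewrite /missing => -> /negPn. Qed.

Lemma missing_full t : missing t -> #|chosen (node t)| = k /\ #|chosen (node t.+1)| = k.
Proof.
move=> /andP[ht hn]; have he := node_edge ht.
have notS x y : [set x; y] \notin H -> [set x; y] \notin S x.
  by apply: contra => h; apply: (subsetP SH); apply/bigcupP; exists x.
split; first exact: card_chosen_full he (notS _ _ hn).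
by apply: (card_chosen_full (y := node t)); rewrite 1?esym // notS // setUC.
Qed.

Lemma chosen_nodes_near y t1 t2 : t1 <= t2 <= s ->
  y \in chosen (node t1) -> y \in chosen (node t2) -> t2 <= t1 + 2.
Proof.
move=> /andP[h12 h2s] hy1 hy2.
have w1 : walk e u (node t1) t1 by apply: walk_prefix => t ht; apply: node_edge; lia.
have w2 : walk e (node t2) v (s - t2) by apply: walk_suffix => // t /andP[_ /node_edge].
have w12 : walk e (node t1) (node t2) (1 + 1).
  by apply: walk_cat (walk1 (chosen_edge hy1)) (walk1 _); rewrite esym chosen_edge.
have := path_shortest (walk_cat (walk_cat w1 w12) w2); lia.
Qed.

Lemma detour_new_or_H i j x y : i <= j <= s ->
  x \in chosen (node i) -> y \in chosen (node j) ->
  (x, y) \in new_close_pairs e H H' \/ walk_le (hrel H) x y (j - i + 2).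
Proof.
move=> /andP[hij hjs] hx hy.
have [exi eix] : e x (node i) /\ e (node i) x by rewrite esym chosen_edge.
have [eyj ejy] : e y (node j) /\ e (node j) y by rewrite esym chosen_edge.
have wij : walk e (node i) (node j) (j - i).
  apply: walk_steps => // t /andP[_ ltj].
  by apply: node_edge; apply: leq_trans ltj hjs.
have [D hD hDle] : exists2 D, dist_is e x y D & D <= 1 + (j - i) + 1.
  exact/walk_dist/(walk_cat (walk_cat (walk1 exi) wij) (walk1 ejy)).
have hDge : s <= i + (1 + D + 1) + (s - j).
  apply: path_shortest; apply: walk_cat (walk_suffix hjs _); last first.
    by move=> t /andP[_ /node_edge].
  apply: walk_cat (walk_cat (walk_cat (walk1 eix) hD.1) (walk1 eyj)).
  by apply: walk_prefix => t ht; apply: node_edge; lia.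
have wH' : walk_le (hrel H') x y (j - i + 2).
  apply: (@walk_leW _ _ _ _ (1 + (j - i) + 1)); last by lia.
  have HH' := sub_hrel (subsetUl H (path_edges u p)).
  have [_ hxi] := chosen_hrel hx; have [hjy _] := chosen_hrel hy.
  apply: walk_cat (walk_cat (walk1 (HH' _ _ hxi)) _) (walk1 (HH' _ _ hjy)).
  apply: walk_steps => // t /andP[_ ltj].
  by apply: node_edge_new; apply: leq_trans ltj hjs.
have [w|nw] := pselect (walk_le (hrel H) x y (j - i + 2)); first by right.
by left; apply: mem_new_close_pairs hD _ nw wH'; lia.
Qed.

(* Otherwise u -> node a -> x -> y -> z -> node c -> v is an H-walk of length
   at most s + 6. *)
Lemma missing_cover a c j x y z :
  (forall t, t < a -> ~~ missing t) -> (forall t, c <= t -> ~~ missing t) ->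
  a <= j <= c -> c <= s ->
  x \in chosen (node a) -> y \in chosen (node j) -> z \in chosen (node c) ->
  ((x, y) \in new_close_pairs e H H') || ((y, z) \in new_close_pairs e H H').
Proof.
move=> ha hc /andP[haj hjc] hcs hx hy hz.
have [->//|wxy] := detour_new_or_H (ltac:(lia) : a <= j <= s) hx hy.
have [->|wyz] := detour_new_or_H (ltac:(lia) : j <= c <= s) hy hz; first by rewrite orbT.
case: no_short_H_walk.
have wua : walk_le (hrel H) u (node a) a.
  apply: walk_leW (leqnn a); apply: walk_prefix => t ht.
  by apply: node_edge_old; [lia|exact: ha].
have wcv : walk_le (hrel H) (node c) v (s - c).
  apply: walk_leW (leqnn _); apply: walk_suffix => // t /andP[hct hts].
  by apply: node_edge_old => //; exact: hc.
have wax := walk_leW (walk1 (chosen_hrel hx).1) (leqnn 1).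
have wzc := walk_leW (walk1 (chosen_hrel hz).2) (leqnn 1).
apply: walk_le_mono (walk_le_cat (walk_le_cat (walk_le_cat (walk_le_cat
  (walk_le_cat wua wax) wxy) wyz) wzc) wcv) _.
lia.
Qed.

Local Notation A := [set t : 'I_s | missing t].
Local Notation Y := (\bigcup_(t in A) chosen (node t)).

Lemma card_new_edges : #|H' :\: H| <= #|A|.
Proof.
apply: leq_trans (leq_imset_card (fun t : 'I_s => [set node t; node t.+1]) _).
apply/subset_leq_card/subsetP => f; rewrite in_setD in_setU => /andP[hf /orP[hH|]].
  by rewrite hH in hf.
case/path_edgesP=> t ht def_f; apply/imsetP; exists (Ordinal ht) => //.
by rewrite inE /missing ht -def_f hf.
Qed.

Lemma card_missing_le : k * #|A| <= 5 * #|Y|.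
Proof.
have -> : k * #|A| = \sum_(t in A) #|chosen (node t)|.
  by rewrite mulnC -sum_nat_const; apply: eq_bigr => t; rewrite inE => /missing_full[->].
apply: sum_card_le_bigcup => y; apply: (@card_near_le _ 2) => i j.
rewrite in_set => /andP[_ hi]; rewrite in_set => /andP[_ hj].
have [ij|ji] := leqP i j; last by lia.
by apply: (chosen_nodes_near _ hi hj); rewrite ij /= ltnW.
Qed.

Lemma card_chosen_cover : k * #|Y| <= 2 * #|new_close_pairs e H H'|.
Proof.
have [A0|[t0 ht0]] := set_0Vmem A; first by rewrite A0 big_set0 cards0 muln0.
have exm : exists t, missing t by exists t0; rewrite inE in ht0.
have ubm t : missing t -> t <= s by case/andP => /ltnW.
case: (ex_minnP exm) => a ma amin; case: (ex_maxnP exm ubm) => c mc cmax.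
apply: (@pair_cover_card _ (chosen (node a)) (chosen (node c.+1))).
- by rewrite (missing_full ma).1.
- by rewrite (missing_full mc).2.
move=> x y z hx /bigcupP[j]; rewrite inE => mj hy hz.
apply: (missing_cover (a := a) (c := c.+1) (j := j)) => // [t ht|t ht||].
- by apply/negP => /amin; rewrite leqNgt ht.
- by apply/negP => /cmax; rewrite leqNgt ht.
- by rewrite amin //= leqW ?cmax.
- by case/andP: mc.
Qed.

Lemma potential_gain :
  k ^ 2 * #|H' :\: H| <= 10 * #|close_triples e H' :\: close_triples e H|.
Proof.
have := card_new_close_pairs e H H'.
have := card_new_edges; have := card_missing_le; have := card_chosen_cover.
nia.
Qed.

End CompletionStep.

Lemma completion_step_gain (H H' : {set {set T}}) :
  \bigcup_(x : T) S x \subset H -> completion_step e 6 H H' ->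
  k ^ 2 * #|H' :\: H| <= 10 * #|close_triples e H' :\: close_triples e H|.
Proof.
move=> SH [u [v [p [huv /andP[hp /eqP hpv] hd ->]]]].
exact: potential_gain SH huv hp hpv hd.
Qed.

Section CompletionRun.
Variables (Hs : nat -> {set {set T}}) (m : nat).
Hypothesis hHs0 : Hs 0 = \bigcup_(x : T) S x.
Hypothesis hstep : forall i, i < m -> completion_step e 6 (Hs i) (Hs i.+1).

Lemma completion_potential i : i <= m ->
  Hs 0 \subset Hs i /\
  k ^ 2 * #|Hs i| + 10 * #|close_triples e (Hs 0)|
    <= k ^ 2 * #|Hs 0| + 10 * #|close_triples e (Hs i)|.
Proof.
elim: i => [|i IH] hi; first by rewrite subxx.
have [sub0 pot] := IH (ltnW hi).
have [u [v [p [_ _ _ defH]]]] := hstep hi.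
have sub : Hs i \subset Hs i.+1 by rewrite defH subsetUl.
have subc := close_triples_mono e sub.
have SHi : \bigcup_(x : T) S x \subset Hs i by rewrite -hHs0.
have := completion_step_gain SHi (hstep hi).
rewrite !cardsDS //; have := subset_leq_card sub; have := subset_leq_card subc.
split; [exact: subset_trans sub | nia].
Qed.

Lemma completion_empty : #|T| = 0 -> #|Hs m| = 0.
Proof.
move=> T0; have noT (x : T) : False.
  have : 0 < #|T| by apply/card_gt0P; exists x.
  by rewrite T0.
have [m0|mpos] := posnP m; last by case: (hstep mpos) => x _; case: (noT x).
by rewrite m0 hHs0; apply/eqP; rewrite cards_eq0; apply/bigcup0P => x; case: (noT x).
Qed.

Lemma card_completion : k ^ 2 * #|Hs m| <= k ^ 3 * #|T| + 50 * #|T| ^ 2.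
Proof.
have [_ pot] := completion_potential (leqnn m).
have card0 : #|Hs 0| <= k * #|T|.
  rewrite hHs0 mulnC -sum_nat_const; apply: leq_trans (card_bigcup_le _) _.
  by apply: leq_sum => x _; rewrite (hS x).2 geq_minl.
have := card_close_triples e (Hs m); nia.
Qed.

End CompletionRun.
End Spanner.

Lemma cube_bound k n E : 0 < k -> k ^ 3 <= n < k.+1 ^ 3 ->
  k ^ 2 * E <= k ^ 3 * n + 50 * n ^ 2 -> E ^ 3 <= 401 ^ 3 * n ^ 4.
Proof.
move=> kpos /andP[lo hi] hE.
have n8 : n <= 8 * k ^ 3.
  have k1 : k.+1 <= 2 * k by lia.
  by apply: leq_trans (ltnW hi) _; rewrite -[8]/(2 ^ 3) -expnMn leq_exp2r.
have {hi}hE : k ^ 2 * E <= k ^ 2 * (401 * n * k).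
  rewrite mulnCA -expnSr mulnAC -mulnA; apply: leq_trans hE _.
  by have := leq_mul n8 (leqnn n); rewrite -mulnn; move: (k ^ 3) => K; lia.
rewrite leq_pmul2l ?expn_gt0 ?kpos // in hE.
apply: leq_trans (_ : (401 * n * k) ^ 3 <= _); first by rewrite leq_exp2r.
rewrite !expnMn (expnS n 3) -mulnA; apply: leq_mul (leqnn _) _.
by rewrite mulnC leq_mul.
Qed.

Theorem theorem1 :
  exists C : nat,
  forall (T : finType) (e : rel T),
    symmetric e -> irreflexive e ->
  forall k : nat, k ^ 3 <= #|T| < k.+1 ^ 3 ->
  forall S : T -> {set {set T}},
    (forall x, S x \subset incident e x /\ #|S x| = minn k (deg e x)) ->
  forall (Hs : nat -> {set {set T}}) (m : nat),
    Hs 0 = \bigcup_(x : T) S x ->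
    (forall i, i < m -> completion_step e 6 (Hs i) (Hs i.+1)) ->
    (forall u v, ~ violating e (Hs m) 6 u v) ->
    #|Hs m| ^ 3 <= C * #|T| ^ 4.
Proof.
exists (401 ^ 3) => T e esym eirr k hk S hS Hs m hHs0 hstep _.
have [k0|kpos] := posnP k.
  have T0 : #|T| = 0 by move: hk; rewrite k0; lia.
  by rewrite (completion_empty hHs0 hstep T0).
exact: cube_bound kpos hk (card_completion esym eirr hS hHs0 hstep).
Qed.
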